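(* For every $n\in\mathbb{N}$, every nonempty chain $c_k$ over $[n]$ with complementary chain $c'_{n-k}$, and every formula $\varphi$, the following are derivable in $\mathbf{CPN}_n$: (i) $\vdash_{(n)}\varphi\wedge_{(n)}\neg_{c_k}\varphi\to_{(n)}\perp_{c_k}$; (ii) $\vdash_{(n)}\perp_{c'_{n-k}}\to_{(n)}\varphi\vee_{(n)}\neg_{c_k}\varphi$; (iii) $\vdash_{(n)}\neg_{c_k}\varphi\to_{(n)}(\perp_{c_k}\to_{(n)}\varphi)$; (iv) $\vdash_{(n)}\neg_{c_k}\varphi\to_{(n)}(\perp_{c'_{n-k}}\to_{(n)}\neg_{(n)}\varphi)$; (v) $\vdash_{(n)}\neg_{c_k}\varphi\to_{(n)}(\varphi\leftrightarrow_{(n)}\perp_{c_k})$; (vi) $\vdash_{(n)}\neg_{c_k}\varphi\wedge_{(n)}\neg_{c'_{n-k}}\varphi\to_{(n)}\perp_{(n)}$; (vii) $\vdash_{(n)}\perp_{c_k}\wedge_{(n)}\perp_{c'_{n-k}}\to_{(n)}\perp_{(n)}$.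
   Context: Fix $n\in\mathbb{N}$, $n\ge 1$, and write $[n]=\{1,\dots,n\}$. Chains: a chain over $[n]$ is a finite sequence of distinct elements of $[n]$; chains with the same length and the same symbols are identified, so a chain is effectively a subset of $[n]$. $c_k$ denotes a chain with $k$ symbols, $\epsilon$ the empty chain, and $(n)$ the chain consisting of all symbols of $[n]$. For chains $c,d$: the concatenation $c\cdot d$ is the chain of symbols occurring in $c$ or in $d$; the coconcatenation $c\otimes d$ is the chain of symbols occurring in exactly one of $c,d$; $d$ is a subchain of $c$ if every symbol of $d$ is a symbol of $c$. The complementary chain $c'_{n-k}$ of $c_k$ is the chain of the symbols of $[n]$ not occurring in $c_k$. Language of $\mathbf{CPN}_n$: a countable set $P_n$ of propositional letters; constants $\perp_c$ for each chain $c$ over $[n]$ with $1\le |c|\le n-1$, and constants $\perp_{(n)}$ (contradiction) and $\top_{(n)}$ (truth); a unary connective $\neg_c$ for each nonempty chain $c$ over $[n]$ ($\neg_{(n)}$ is the strong negation; the $\neg_c$ with $|c|\le n-1$ are weak negations); a binary connective $\to_{(n)}$. Formulas: propositional letters and constants are formulas; if $\varphi,\psi$ are formulas then so are $\neg_c\varphi$ and $(\varphi\to_{(n)}\psi)$. Conventions: $\neg_\epsilon\varphi:=\varphi$, $\perp_\epsilon:=\top_{(n)}$, and $\perp_c$ for $c=(n)$ means $\perp_{(n)}$. Abbreviations: $\varphi\wedge_{(n)}\psi:=\neg_{(n)}(\varphi\to_{(n)}\neg_{(n)}\psi)$, $\varphi\vee_{(n)}\psi:=\neg_{(n)}\varphi\to_{(n)}\psi$,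 $\varphi\leftrightarrow_{(n)}\psi:=(\varphi\to_{(n)}\psi)\wedge_{(n)}(\psi\to_{(n)}\varphi)$. Axioms of $\mathbf{CPN}_n$, for all formulas $\varphi,\psi,\chi$ and all nonempty chains $c_k,c_r$ over $[n]$: (A1) $\varphi\to_{(n)}(\psi\to_{(n)}\varphi)$; (A2) $(\varphi\to_{(n)}(\psi\to_{(n)}\chi))\to_{(n)}((\varphi\to_{(n)}\psi)\to_{(n)}(\varphi\to_{(n)}\chi))$; (A3) $(\neg_{(n)}\psi\to_{(n)}\neg_{(n)}\varphi)\to_{(n)}((\neg_{(n)}\psi\to_{(n)}\varphi)\to_{(n)}\psi)$; (A4) $\varphi\to_{(n)}(\perp_{c_k}\to_{(n)}\neg_{c_k}\varphi)$; (A5) $\neg_{c_k}\neg_{c_r}\varphi\leftrightarrow_{(n)}\neg_{c_k\otimes c_r}\varphi$; (A6) $\neg_{c_k}\perp_{c_r}\leftrightarrow_{(n)}\perp_{c_k\otimes c_r}$; (A7) $\perp_{c_k}\to_{(n)}\perp_{c_r}$, whenever $c_r$ is a subchain of $c_k$. The only rule of inference is modus ponens (from $\varphi$ and $\varphi\to_{(n)}\psi$ infer $\psi$). For a set $\Sigma$ of formulas, $\Sigma\vdash_{(n)}\varphi$ means there is a finite sequence of formulas ending with $\varphi$, each of which is an axiom, a member of $\Sigma$, or obtained from two earlier members by modus ponens; $\vdash_{(n)}\varphi$ means $\emptyset\vdash_{(n)}\varphi$. *)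

(* Chains over [n] are sets of symbols; [n] is modelled by 'I_n. *)
From mathcomp Require Import all_boot.
Set Implicit Arguments.
Unset Strict Implicit.
Unset Printing Implicit Defensive.

Section CPN.
Variable n : nat.

Definition chain := {set 'I_n}.
Definition nechain := {c : chain | c != set0}.

(* Constants: [Bot c] for every chain c; [Bot set0] is top_(n) (= bot_eps by
   convention), [Bot setT] is bot_(n), and the others are bot_c with
   1 <= |c| <= n-1.  Negations are indexed by nonempty chains. *)
Inductive form : Type :=
| Var : nat -> form
| Bot : chain -> form
| Neg : nechain -> form -> form
| Imp : form -> form -> form.

Definition full : chain := setT.
Definition topF : form := Bot set0.
Definition botF : form := Bot full.

(* neg_c with the convention neg_eps phi := phi *)
Definition negc (c : chain) (phi : form) : form :=
  match insub c with Some c' => Neg c' phi | None => phi end.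

Definition sneg (phi : form) : form := negc full phi.
Definition andF (phi psi : form) : form := sneg (Imp phi (sneg psi)).
Definition orF (phi psi : form) : form := Imp (sneg phi) psi.
Definition iffF (phi psi : form) : form := andF (Imp phi psi) (Imp psi phi).

Definition cocat (c d : chain) : chain := (c :\: d) :|: (d :\: c).
Definition compl (c : chain) : chain := ~: c.

Inductive deriv (Sigma : form -> Prop) : form -> Prop :=
| A1 phi psi : deriv Sigma (Imp phi (Imp psi phi))
| A2 phi psi chi : deriv Sigma
    (Imp (Imp phi (Imp psi chi)) (Imp (Imp phi psi) (Imp phi chi)))
| A3 phi psi : deriv Sigma
    (Imp (Imp (sneg psi) (sneg phi)) (Imp (Imp (sneg psi) phi) psi))
| A4 phi (ck : chain) : ck != set0 ->
    deriv Sigma (Imp phi (Imp (Bot ck) (negc ck phi)))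
| A5 phi (ck cr : chain) : ck != set0 -> cr != set0 ->
    deriv Sigma (iffF (negc ck (negc cr phi)) (negc (cocat ck cr) phi))
| A6 (ck cr : chain) : ck != set0 -> cr != set0 ->
    deriv Sigma (iffF (negc ck (Bot cr)) (Bot (cocat ck cr)))
| A7 (ck cr : chain) : ck != set0 -> cr != set0 -> cr \subset ck ->
    deriv Sigma (Imp (Bot ck) (Bot cr))
| Hyp phi : Sigma phi -> deriv Sigma phi
| MP phi psi : deriv Sigma phi -> deriv Sigma (Imp phi psi) -> deriv Sigma psi.

Definition provable (phi : form) : Prop := deriv (fun _ => False) phi.

End CPN.

(* A1-A3 with modus ponens are classical propositional logic for ->_(n) and the strong
   negation, so CPN_n has the deduction theorem and reductio ad absurdum.  Since
   (n) (x) c = c', axioms A5 and A6 say that strongly negating neg_c phi or bot_c gives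
   neg_c' phi or bot_c'; this yields (i), (vi) and (vii).  A4 followed by A5 gives the
   rule  neg_r phi, bot_d |- neg_(d (x) r) phi,  and (ii)-(iv) are its instances
   c (x) c = eps, c' (x) (n) = c and c' (x) c = (n); (v) combines (i) and (iii). *)
From mathcomp Require Import all_boot.
Set Implicit Arguments.
Unset Strict Implicit.
Unset Printing Implicit Defensive.

Section HilbertCalculus.
Variable n : nat.
Implicit Types (S : form n -> Prop) (a b : form n).

Definition add_hyp S a : form n -> Prop := fun x => S x \/ x = a.

Lemma deriv_sub S S' a : (forall x, S x -> S' x) -> deriv S a -> deriv S' a.
Proof.
move=> subS; elim=> {a}.
- exact: A1.
- exact: A2.
- exact: A3.
- exact: A4.
- exact: A5.
- exact: A6.
- exact: A7.
- by move=> x /subS; apply: Hyp.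
- by move=> x y _ Dx _ Dxy; apply: MP Dx Dxy.
Qed.

Lemma deriv_add_hyp {S a b} : deriv S b -> deriv (add_hyp S a) b.
Proof. by apply: deriv_sub => x Sx; left. Qed.

Lemma deriv_hyp {S a} : deriv (add_hyp S a) a.
Proof. by apply: Hyp; right. Qed.

Lemma mp S a b : deriv S (Imp a b) -> deriv S a -> deriv S b.
Proof. by move=> Dab Da; apply: MP Da Dab. Qed.

Lemma deriv_imp_refl S a : deriv S (Imp a a).
Proof. exact: MP (A1 _ a a) (MP (A1 _ a (Imp a a)) (A2 _ _ _ _)). Qed.

Lemma deriv_imp_const S a b : deriv S b -> deriv S (Imp a b).
Proof. exact: mp (A1 _ _ _). Qed.

Lemma deduction S a b : deriv (add_hyp S a) b -> deriv S (Imp a b).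
Proof.
elim=> {b}.
- by move=> *; apply/deriv_imp_const/A1.
- by move=> *; apply/deriv_imp_const/A2.
- by move=> *; apply/deriv_imp_const/A3.
- by move=> *; apply/deriv_imp_const/A4.
- by move=> *; apply/deriv_imp_const/A5.
- by move=> *; apply/deriv_imp_const/A6.
- by move=> *; apply/deriv_imp_const/A7.
- by move=> x [Sx|->]; [apply/deriv_imp_const/Hyp | apply: deriv_imp_refl].
- by move=> x y _ Dx _ Dxy; apply: mp (mp (A2 _ _ _ _) Dxy) Dx.
Qed.

Lemma raa S a b :
  deriv (add_hyp S (sneg a)) b -> deriv (add_hyp S (sneg a)) (sneg b) ->
  deriv S a.
Proof.
by move=> /deduction Db /deduction Dnb; apply: mp (mp (A3 _ _ _) Dnb) Db.
Qed.

Lemma explosion S a b : deriv S a -> deriv S (sneg a) -> deriv S b.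
Proof. by move=> Da Dna; apply: (raa (b := a)); apply: deriv_add_hyp. Qed.

Lemma sneg_sneg_elim S a : deriv S (sneg (sneg a)) -> deriv S a.
Proof.
by move=> Dnna; apply: (raa (b := sneg a)); [apply: deriv_hyp | apply: deriv_add_hyp].
Qed.

Lemma andFEl S a b : deriv S (andF a b) -> deriv S a.
Proof.
move=> Dab; apply: (raa (b := Imp a (sneg b))); last exact: deriv_add_hyp.
apply: deduction; apply: (explosion (a := a)); first exact: deriv_hyp.
exact/deriv_add_hyp/deriv_hyp.
Qed.

Lemma andFEr S a b : deriv S (andF a b) -> deriv S b.
Proof.
move=> Dab; apply: (raa (b := Imp a (sneg b))); last exact: deriv_add_hyp.
exact/deriv_imp_const/deriv_hyp.
Qed.

Lemma andFI S a b : deriv S a -> deriv S b -> deriv S (andF a b).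
Proof.
move=> Da Db; apply: (raa (b := b)); first exact: deriv_add_hyp.
exact: mp (sneg_sneg_elim deriv_hyp) (deriv_add_hyp Da).
Qed.

Lemma iffFI S a b : deriv S (Imp a b) -> deriv S (Imp b a) -> deriv S (iffF a b).
Proof. exact: andFI. Qed.

Lemma iffFEl S a b : deriv S (iffF a b) -> deriv S a -> deriv S b.
Proof. by move/andFEl; apply: mp. Qed.

Lemma iffFEr S a b : deriv S (iffF a b) -> deriv S b -> deriv S a.
Proof. by move/andFEr; apply: mp. Qed.

Lemma iffF_refl S a : deriv S (iffF a a).
Proof. by apply: iffFI; apply: deriv_imp_refl. Qed.

End HilbertCalculus.

Arguments deriv_hyp {n S a}.
Arguments deriv_add_hyp {n S a b}.

Section Chains.
Variable n : nat.
Implicit Types c d : chain n.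

Lemma cocatC c d : cocat c d = cocat d c.
Proof. exact: setUC. Qed.

Lemma cocat0c c : cocat set0 c = c.
Proof. by apply/setP=> x; rewrite !inE; case: (x \in c). Qed.

Lemma cocatcc c : cocat c c = set0.
Proof. by apply/setP=> x; rewrite !inE; case: (x \in c). Qed.

Lemma cocat_fullc c : cocat (full n) c = compl c.
Proof. by apply/setP=> x; rewrite !inE; case: (x \in c). Qed.

Lemma cocat_complc c : cocat (compl c) c = full n.
Proof. by apply/setP=> x; rewrite !inE; case: (x \in c). Qed.

Lemma cocat_compl_full c : cocat (compl c) (full n) = c.
Proof. by rewrite cocatC cocat_fullc /compl setCK. Qed.

Lemma full_neq0 c : c != set0 -> full n != set0.
Proof. by apply: contraNneq => full0; rewrite -subset0 -full0 subsetT. Qed.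

Lemma negc0 (phi : form n) : negc set0 phi = phi.
Proof. by rewrite /negc insubN // eqxx. Qed.

End Chains.

Section NegationsOfChains.
Variable n : nat.
Implicit Types (S : form n -> Prop) (c d r : chain n) (phi : form n).

(* Unlike A4 and A5, these also cover the empty chain, where neg_eps phi = phi. *)
Lemma negc_intro S d phi : deriv S phi -> deriv S (Bot d) -> deriv S (negc d phi).
Proof.
move=> Dphi Dbot; apply: mp (mp _ Dphi) Dbot.
by have [->|/A4//] := eqVneq d set0; rewrite negc0; apply: A1.
Qed.

Lemma deriv_negc_negc S d r phi :
  deriv S (iffF (negc d (negc r phi)) (negc (cocat d r) phi)).
Proof.
have [->|d0] := eqVneq d set0; first by rewrite negc0 cocat0c; apply: iffF_refl.
have [->|r0] := eqVneq r set0.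
  by rewrite negc0 cocatC cocat0c; apply: iffF_refl.
exact: A5.
Qed.

Lemma negc_cocat_intro S d r phi :
  deriv S (negc r phi) -> deriv S (Bot d) -> deriv S (negc (cocat d r) phi).
Proof.
by move=> Dneg Dbot; apply: iffFEl (deriv_negc_negc _ _ _ _) (negc_intro Dneg Dbot).
Qed.

Lemma sneg_Bot S c : c != set0 -> deriv S (iffF (sneg (Bot c)) (Bot (compl c))).
Proof. by move=> c0; rewrite -cocat_fullc; apply: A6 (full_neq0 c0) c0. Qed.

Lemma sneg_negc S c phi : deriv S (iffF (sneg (negc c phi)) (negc (compl c) phi)).
Proof. by rewrite -cocat_fullc; apply: deriv_negc_negc. Qed.

End NegationsOfChains.

Section Theorem5.
Variables (n : nat) (S : form n -> Prop) (c : chain n) (phi : form n).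
Hypothesis c_neq0 : c != set0.

Lemma and_negc_imp_Bot : deriv S (Imp (andF phi (negc c phi)) (Bot c)).
Proof.
apply: deduction; apply: (raa (b := negc c phi)).
  exact/deriv_add_hyp/andFEr/deriv_hyp.
apply: iffFEr (sneg_negc _ _ _) _.
apply: negc_intro; first exact/deriv_add_hyp/andFEl/deriv_hyp.
exact: iffFEl (sneg_Bot _ c_neq0) deriv_hyp.
Qed.

Lemma Bot_compl_imp_or_negc : deriv S (Imp (Bot (compl c)) (orF phi (negc c phi))).
Proof.
apply/deduction/deduction; rewrite -[X in negc X](cocat_compl_full c).
by apply: negc_cocat_intro; [apply: deriv_hyp | apply/deriv_add_hyp/deriv_hyp].
Qed.

Lemma negc_imp_Bot_imp : deriv S (Imp (negc c phi) (Imp (Bot c) phi)).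
Proof.
apply/deduction/deduction; rewrite -[X in deriv _ X](negc0 phi) -(cocatcc c).
by apply: negc_cocat_intro; [apply/deriv_add_hyp/deriv_hyp | apply: deriv_hyp].
Qed.

Lemma negc_imp_Bot_compl_imp_sneg :
  deriv S (Imp (negc c phi) (Imp (Bot (compl c)) (sneg phi))).
Proof.
apply/deduction/deduction; rewrite /sneg -(cocat_complc c).
by apply: negc_cocat_intro; [apply/deriv_add_hyp/deriv_hyp | apply: deriv_hyp].
Qed.

Lemma negc_imp_iff_Bot : deriv S (Imp (negc c phi) (iffF phi (Bot c))).
Proof.
apply: deduction; apply: iffFI.
  apply: deduction; apply: mp (deriv_add_hyp (deriv_add_hyp and_negc_imp_Bot)) _.
  exact: andFI deriv_hyp (deriv_add_hyp deriv_hyp).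
exact: mp (deriv_add_hyp negc_imp_Bot_imp) deriv_hyp.
Qed.

Lemma and_negc_compl_imp_bot :
  deriv S (Imp (andF (negc c phi) (negc (compl c) phi)) (botF n)).
Proof.
apply: deduction; apply: explosion (andFEl deriv_hyp) _.
exact: iffFEr (sneg_negc _ _ _) (andFEr deriv_hyp).
Qed.

Lemma and_Bot_compl_imp_bot : deriv S (Imp (andF (Bot c) (Bot (compl c))) (botF n)).
Proof.
apply: deduction; apply: explosion (andFEl deriv_hyp) _.
exact: iffFEr (sneg_Bot _ c_neq0) (andFEr deriv_hyp).
Qed.

End Theorem5.

Theorem mainTheorem5 (n : nat) (ck : {set 'I_n}) (phi : form n) :
  ck != set0 ->
  let ck' := compl ck in
  provable (Imp (andF phi (negc ck phi)) (Bot ck)) /\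
  provable (Imp (Bot ck') (orF phi (negc ck phi))) /\
  provable (Imp (negc ck phi) (Imp (Bot ck) phi)) /\
  provable (Imp (negc ck phi) (Imp (Bot ck') (sneg phi))) /\
  provable (Imp (negc ck phi) (iffF phi (Bot ck))) /\
  provable (Imp (andF (negc ck phi) (negc ck' phi)) (botF n)) /\
  provable (Imp (andF (Bot ck) (Bot ck')) (botF n)).
Proof.
move=> ck_neq0 ck'; split; first exact: and_negc_imp_Bot.
split; first exact: Bot_compl_imp_or_negc.
split; first exact: negc_imp_Bot_imp.
split; first exact: negc_imp_Bot_compl_imp_sneg.
split; first exact: negc_imp_iff_Bot.
split; first exact: and_negc_compl_imp_bot.
exact: and_Bot_compl_imp_bot.
Qed.
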